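(* Let $p$ be a positive integer. Then $\mathrm{spec}_{\mathrm{imp}}(p)=\{0,1,2,\dots,p-1\}$. That is, for every integer $n$ with $0\le n\le p-1$ there exists a critical exactly $p$-improper interval graph $G$ and a vertex $v$ of $G$ such that $G-v$ is exactly $n$-improper, and every integer $n$ arising in this way (from some critical exactly $p$-improper interval graph by removing a single vertex) lies in $\{0,1,\dots,p-1\}$.
   Context: An interval graph is a graph admitting an interval representation: an assignment of a closed real interval to each vertex so that two distinct vertices are adjacent if and only if their intervals intersect. For an integer $p\ge 0$, a graph is $p$-improper (a $p$-improper interval graph) if it has an interval representation in which no interval contains more than $p$ other intervals. Every $(p-1)$-improper interval graph is also $p$-improper. A graph is exactly $p$-improper if it is $p$-improper but not $(p-1)$-improper (for $p=0$: it is $0$-improper); in particular every interval graph is exactly $n$-improper for a unique $n\ge 0$, its impropriety. A critical $p$-improper interval graph is a $p$-improper interval graph $G$ such that $G-v$ is $(p-1)$-improper for every vertex $v$ of $G$. The spectrum of impropriety $\mathrm{spec}_{\mathrm{imp}}(p)$ is the set of all integers $n$ such that some critical exactly $p$-improper interval graph $G$ has a vertex $v$ with $G-v$ exactly $n$-improper. *)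

From HB Require Import structures.
From mathcomp Require Import all_boot all_order all_algebra.
From mathcomp Require Import Rstruct.
From Stdlib Require Rdefinitions.
Notation R := Rdefinitions.R.
Set Implicit Arguments. Unset Strict Implicit. Unset Printing Implicit Defensive.
Import Order.TTheory GRing.Theory Num.Theory.

Definition simple_graph (T : finType) (e : rel T) : Prop :=
  symmetric e /\ irreflexive e.

(* An interval representation of the induced subgraph G[S]: vertex x in S gets
   the closed interval [l x, r x] (l x <= r x), and distinct x, y in S are
   adjacent iff their intervals intersect. *)
Definition interval_rep (T : finType) (e : rel T) (S : {set T}) (l r : T -> R) : Prop :=
  (forall x, x \in S -> (l x <= r x)%R) /\
  (forall x y, x \in S -> y \in S -> x != y ->
     (e x y <-> ((l x <= r y)%R && (l y <= r x)%R))).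

Definition n_contained (T : finType) (S : {set T}) (l r : T -> R) (x : T) : nat :=
  #|[set y in S | (y != x) && (l x <= l y)%R && (r y <= r x)%R]|.

Definition improper_on (T : finType) (e : rel T) (S : {set T}) (p : nat) : Prop :=
  exists l r : T -> R, interval_rep e S l r /\
    (forall x, x \in S -> n_contained S l r x <= p).

Definition exactly_improper_on (T : finType) (e : rel T) (S : {set T}) (p : nat) : Prop :=
  improper_on e S p /\ (0 < p -> ~ improper_on e S p.-1).

Definition critical_improper (T : finType) (e : rel T) (p : nat) : Prop :=
  improper_on e [set: T] p /\ (forall v : T, improper_on e [set~ v] p.-1).

Definition in_spec_imp (p n : nat) : Prop :=
  exists (T : finType) (e : rel T) (v : T),
    simple_graph e /\ critical_improper e p /\ exactly_improper_on e [set: T] p /\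
    exactly_improper_on e [set~ v] n.

(* Upper bound: if G is critical exactly p-improper and n >= p > 0, then G - v is
   (p-1)-improper, hence (n-1)-improper, so it is not exactly n-improper.

   If the neighbours of a vertex c include an independent set D, then c's
   interval contains all but at most two members of D: a member not nested in it meets
   one of its endpoints, and pairwise disjoint intervals meet a point at most once.
   Hence the star K_{1,p+2} is exactly p-improper while deleting a leaf leaves an
   exactly (p-1)-improper star, which gives n = p - 1.  For n < p - 1 put m = n + 1 and
   k = p - m, and let G consist of a star with centre Hub and leaves Arm, Leaf 0..m-1,
   a pendant vertex Hand at Arm, isolated vertices Loner 0..k-1, and a vertex Center
   adjacent to all of them.  G - Center is exactly (m-1)-improper by the star argument
   at Hub.  In a representation of G, each endpoint of Center's interval meets at most
   one of the independent vertices Hand, Leaf i, Loner j.  If Hub and Arm both stick out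
   of Center's interval they meet a common endpoint (otherwise their union covers it and
   Loner 0 would meet one of them), and none of Hand, Leaf i, Loner j meets that
   endpoint, since none is adjacent to both.  So Center contains at least m + k intervals, and three explicit
   layouts show that G is (m+k)-improper and that every G - v is (m+k-1)-improper. *)

From HB Require Import structures.
From mathcomp Require Import all_boot all_order all_algebra perm.
From mathcomp Require Import Rstruct lra zify.
Set Implicit Arguments. Unset Strict Implicit. Unset Printing Implicit Defensive.
Import Order.TTheory GRing.Theory Num.Theory.

Section IntervalRepresentations.
Variables (T : finType) (e : rel T).

Definition independent (D : {set T}) : Prop :=
  {in D &, forall x y, x != y -> ~~ e x y}.

Definition nested (l r : T -> R) (x y : T) : bool := (l x <= l y)%R && (r y <= r x)%R.

Definition covers (l r : T -> R) (y : T) (t : R) : bool := (l y <= t <= r y)%R.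

Lemma n_containedE (S : {set T}) l r x :
  n_contained S l r x = #|[set y in S :\ x | nested l r x y]|.
Proof. by apply: eq_card => y; rewrite !inE /nested -!andbA andbCA. Qed.

Lemma n_contained_subset (S S' : {set T}) l r x :
  S \subset S' -> n_contained S l r x <= n_contained S' l r x.
Proof.
move=> /subsetP sSS'; apply/subset_leq_card/subsetP => y.
by rewrite !inE => /andP[/sSS' -> ->].
Qed.

Lemma n_contained_setC1 l r x w : w != x -> nested l r x w ->
  n_contained [set~ w] l r x = (n_contained [set: T] l r x).-1.
Proof.
move=> wx xw; rewrite !n_containedE (cardsD1 w [set y in [set: T] :\ x | _]) !inE wx xw /=.
by apply: eq_card => y; rewrite !inE andbT andbA [(y != w) && _]andbC.
Qed.

Definition uncontained (S : {set T}) l r x : {set T} := [set y in S :\ x | ~~ nested l r x y].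

Lemma n_contained_add_uncontained (S : {set T}) l r x :
  n_contained S l r x + #|uncontained S l r x| = #|S :\ x|.
Proof.
rewrite n_containedE -(cardsID [set y | nested l r x y] (S :\ x)).
by congr (_ + _); apply: eq_card => y; rewrite !inE // andbC.
Qed.

Lemma card_setU3_le (A B C : {set T}) : #|A :|: B :|: C| <= #|A| + #|B| + #|C|.
Proof. by rewrite !(leq_trans (leq_card_setU _ _)) ?leq_add2r ?leq_card_setU. Qed.

Lemma interval_rep_subset (S S' : {set T}) l r :
  S \subset S' -> interval_rep e S' l r -> interval_rep e S l r.
Proof.
move=> /subsetP sSS' [lr adj]; split=> [x /sSS'|x y /sSS' xS /sSS' yS]; first exact: lr.
exact: adj.
Qed.

Lemma improper_on_mono (S : {set T}) q q' :
  q <= q' -> improper_on e S q -> improper_on e S q'.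
Proof.
by move=> qq' [l [r [rep hc]]]; exists l, r; split=> // x /hc /leq_trans; apply.
Qed.

Lemma improper_on_subset (S S' : {set T}) l r q :
  S \subset S' -> interval_rep e S' l r ->
  (forall x, x \in S -> n_contained S l r x <= q) -> improper_on e S q.
Proof. by move=> sSS' rep hc; exists l, r; split=> //; apply: interval_rep_subset rep. Qed.

Lemma exactly_improper_on_intro (S : {set T}) q : improper_on e S q ->
  (forall l r, interval_rep e S l r -> exists2 x, x \in S & q <= n_contained S l r x) ->
  exactly_improper_on e S q.
Proof.
move=> imp lb; split=> // q0 [l [r [rep hc]]].
by have [x xS /leq_trans/(_ (hc x xS))] := lb l r rep; lia.
Qed.

Lemma improper_on_setC1_nested l r c v q :
  interval_rep e [set: T] l r -> v != c -> nested l r c v ->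
  n_contained [set: T] l r c <= q.+1 ->
  (forall x, x != c -> n_contained [set: T] l r x <= q) -> improper_on e [set~ v] q.
Proof.
move=> rep vc cv hc hx; apply: improper_on_subset (subsetT _) rep _ => x _.
have [->|xc] := eqVneq x c; last exact: leq_trans (n_contained_subset _ _ _ (subsetT _)) (hx x xc).
by rewrite n_contained_setC1 //; lia.
Qed.

Lemma card_le_injective_range (A : {set T}) (f : T -> nat) a c :
  {in A &, injective f} -> (forall x, x \in A -> a <= f x < a + c) -> #|A| <= c.
Proof.
move=> finj frange; rewrite cardE -(size_map f) -(size_iota a c).
apply: uniq_leq_size => [|_ /mapP[x + ->]].
  by rewrite map_inj_in_uniq ?enum_uniq // => x y; rewrite !mem_enum; apply: finj.
by rewrite mem_enum mem_iota => /frange.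
Qed.

Definition left_end (I : T -> nat * nat) (x : T) : R := ((I x).1)%:R%R.
Definition right_end (I : T -> nat * nat) (x : T) : R := ((I x).2)%:R%R.

Lemma interval_rep_nat (S : {set T}) (I : T -> nat * nat) :
  (forall x, x \in S -> (I x).1 <= (I x).2) ->
  (forall x y, x \in S -> y \in S -> x != y ->
     e x y = ((I x).1 <= (I y).2) && ((I y).1 <= (I x).2)) ->
  interval_rep e S (left_end I) (right_end I).
Proof.
move=> lr adj; split=> [x /lr|x y xS yS /(adj x y xS yS) ->];
  by rewrite /left_end /right_end ?ler_nat.
Qed.

Lemma nested_nat (I : T -> nat * nat) x y :
  nested (left_end I) (right_end I) x y = ((I x).1 <= (I y).1) && ((I y).2 <= (I x).2).
Proof. by rewrite /nested /left_end /right_end !ler_nat. Qed.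

Lemma n_contained_nat_le (S : {set T}) (I : T -> nat * nat) x (f : T -> nat) a c :
  injective f ->
  (forall y, y != x -> (I x).1 <= (I y).1 -> (I y).2 <= (I x).2 -> a <= f y < a + c) ->
  n_contained S (left_end I) (right_end I) x <= c.
Proof.
move=> finj frange; rewrite n_containedE; apply: (card_le_injective_range (a := a)).
  by move=> y z _ _; apply: finj.
by move=> y; rewrite !inE nested_nat => /andP[/andP[yx _] /andP[]]; apply: frange.
Qed.

Lemma n_contained_nat_eq0 (S : {set T}) (I : T -> nat * nat) x :
  (forall y, y != x -> (I x).1 <= (I y).1 -> (I y).2 <= (I x).2 -> False) ->
  n_contained S (left_end I) (right_end I) x = 0.
Proof.
move=> nonest; rewrite n_containedE; apply: eq_card0 => y; rewrite !inE nested_nat.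
by apply/negP => /andP[/andP[yx _] /andP[]]; apply: nonest.
Qed.

Section Representation.
Variables (S : {set T}) (l r : T -> R).
Hypothesis rep : interval_rep e S l r.

Lemma edge_of_covers x y t : x \in S -> y \in S -> x != y ->
  covers l r x t -> covers l r y t -> e x y.
Proof.
move=> xS yS xy /andP[? ?] /andP[? ?].
by apply/(rep.2 x y xS yS xy)/andP; split; lra.
Qed.

Lemma independent_covers_le1 (D : {set T}) t : D \subset S -> independent D ->
  #|[set y in D | covers l r y t]| <= 1.
Proof.
move=> /subsetP sDS indD; apply/card_le1_eqP => x y.
rewrite !inE => /andP[xD xt] /andP[yD yt]; apply/eqP/negPn/negP; rewrite eq_sym => xy.
by have /negP := indD x y xD yD xy; apply; apply: edge_of_covers xt yt; rewrite ?sDS.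
Qed.

Lemma neighbor_covers_endpoint c y : c \in S -> y \in S -> y != c -> e c y ->
  ~~ nested l r c y -> covers l r y (l c) || covers l r y (r c).
Proof.
move=> cS yS yc /(rep.2 c y cS yS); rewrite eq_sym yc => /(_ isT) /andP[? ?].
by rewrite /nested /covers negb_and -!ltNge => /orP[?|?]; apply/orP; [left|right];
  apply/andP; split; lra.
Qed.

Lemma independent_neighbors_card (D : {set T}) c : c \in S -> D \subset S -> c \notin D ->
  independent D -> (forall y, y \in D -> e c y) -> #|D| <= (n_contained S l r c).+2.
Proof.
move=> cS sDS cD indD adj.
pose Dt t := [set y in D | covers l r y t].
have sub : D \subset [set y in S :\ c | nested l r c y] :|: Dt (l c) :|: Dt (r c).
  apply/subsetP => y yD; have yS := subsetP sDS _ yD.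
  have yc : y != c by apply: contraNneq cD => <-.
  have [cy|ncy] := boolP (nested l r c y); first by rewrite !inE yc yS cy.
  by have /orP[] := neighbor_covers_endpoint cS yS yc (adj y yD) ncy;
    rewrite !inE yD => ->; rewrite ?orbT.
have := independent_covers_le1 (l c) sDS indD; have := independent_covers_le1 (r c) sDS indD.
move: (leq_trans (subset_leq_card sub) (card_setU3_le _ _ _)); rewrite n_containedE /Dt; lia.
Qed.

Lemma bridge_edge c y1 y2 z : c \in S -> y1 \in S -> y2 \in S -> z \in S ->
  y1 != y2 -> z != y1 -> z != y2 -> z != c -> e y1 y2 -> e c z ->
  covers l r y1 (l c) -> covers l r y2 (r c) -> e z y1 || e z y2.
Proof.
move=> cS y1S y2S zS y12 zy1 zy2 zc /(rep.2 _ _ y1S y2S y12) /andP[? ?].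
move=> /(rep.2 _ _ cS zS); rewrite eq_sym zc => /(_ isT) /andP[? ?] /andP[? ?] /andP[? ?].
have [//|nzy1] := boolP (e z y1); apply/(rep.2 _ _ zS y2S zy2)/andP.
have : ~~ ((l z <= r y1) && (l y1 <= r z))%R by apply: contra nzy1 => /(rep.2 _ _ zS y1S zy1).
have := rep.1 z zS; rewrite negb_and -!ltNge => ? /orP[?|?]; split; lra.
Qed.

Lemma covers_common_endpoint c y1 y2 z : c \in S -> y1 \in S -> y2 \in S -> z \in S ->
  y1 != y2 -> z != y1 -> z != y2 -> z != c -> e y1 y2 -> e c z -> ~~ e z y1 -> ~~ e z y2 ->
  covers l r y1 (l c) || covers l r y1 (r c) -> covers l r y2 (l c) || covers l r y2 (r c) ->
  covers l r y1 (l c) && covers l r y2 (l c) || covers l r y1 (r c) && covers l r y2 (r c).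
Proof.
move=> cS y1S y2S zS y12 zy1 zy2 zc e12 ecz /negbTE nz1 /negbTE nz2.
have e21 : e y2 y1.
  have := rep.2 _ _ y2S y1S; rewrite eq_sym y12 => /(_ isT) [_]; apply.
  by rewrite andbC; apply/(rep.2 _ _ y1S y2S y12).
case/orP=> [y1l|y1r] /orP[y2l|y2r]; rewrite ?y1l ?y2l ?y1r ?y2r ?orbT //.
- by have := bridge_edge cS y1S y2S zS y12 zy1 zy2 zc e12 ecz y1l y2r; rewrite nz1 nz2.
- have y21 : y2 != y1 by rewrite eq_sym.
  by have := bridge_edge cS y2S y1S zS y21 zy2 zy1 zc e21 ecz y2l y1r; rewrite nz1 nz2.
Qed.

End Representation.
End IntervalRepresentations.

Lemma in_spec_imp_lt p n : 0 < p -> in_spec_imp p n -> n < p.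
Proof.
move=> p_gt0 [T [e [v [_ [[_ crit] [_ [_ not_pred]]]]]]].
rewrite ltnNge; apply/negP => p_le_n; apply: not_pred; first exact: leq_trans p_le_n.
by apply: improper_on_mono (crit v); lia.
Qed.

Section Star.
Variable q : nat.
Hypothesis q_gt0 : 0 < q.
Local Notation V := (option 'I_q.+2).

Definition star_edge : rel V := fun x y => (x == None) != (y == None).

Lemma star_simple : simple_graph star_edge.
Proof. by split=> [[?|] [?|]|[?|]]. Qed.

Definition star_slot (w i : 'I_q.+2) : nat := tperm w (inord 1) i.

Lemma star_slot_inj w : injective (star_slot w).
Proof. by move=> i j /val_inj/perm_inj. Qed.

Lemma star_slot_lt w i : star_slot w i < q.+2.
Proof. exact: ltn_ord. Qed.

Lemma star_slot_id w : star_slot w w = 1.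
Proof. by rewrite /star_slot tpermL inordK. Qed.

(* Leaf i sits in slot [tperm w 1 i]; the centre's interval contains exactly the
   slots 1..q, among them leaf w, while slots 0 and q+1 stick out on either side. *)
Definition star_interval (w : 'I_q.+2) (x : V) : nat * nat :=
  if x is Some i then (3 * star_slot w i + 1, 3 * star_slot w i + 2) else (2, 3 * q + 4).

Local Notation sl w := (left_end (star_interval w)).
Local Notation sr w := (right_end (star_interval w)).

Definition star_index (w : 'I_q.+2) (x : V) : nat :=
  if x is Some i then star_slot w i else q.+2.

Lemma star_index_inj w : injective (star_index w).
Proof.
move=> [i|] [j|] //= => [/star_slot_inj -> //|ij|ij].
- by have := star_slot_lt w i; lia.
- by have := star_slot_lt w j; lia.
Qed.

Lemma star_rep w : interval_rep star_edge [set: V] (sl w) (sr w).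
Proof.
apply: interval_rep_nat => [[i|] _|[i|] [j|] _ _ //= ij]; rewrite /star_edge /=; try lia.
- have : star_slot w i != star_slot w j.
    by rewrite (inj_eq (@star_slot_inj w)); apply: contraNneq ij => ->.
  lia.
- by have := star_slot_lt w i; lia.
- by have := star_slot_lt w j; lia.
Qed.

Lemma star_n_contained_leaf w S i : n_contained S (sl w) (sr w) (Some i) = 0.
Proof.
apply: n_contained_nat_eq0 => -[j|] /=; last by lia.
by rewrite (inj_eq (@Some_inj _)) -(inj_eq (@star_slot_inj w)); lia.
Qed.

Lemma star_n_contained_center w : n_contained [set: V] (sl w) (sr w) None <= q.
Proof.
apply: (n_contained_nat_le (a := 1) _ (@star_index_inj w)) => -[j|] //=; lia.
Qed.

Lemma star_improper_setC1_leaf w : improper_on star_edge [set~ Some w] q.-1.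
Proof.
apply: (improper_on_setC1_nested (c := None) (star_rep w)) => //.
- by rewrite nested_nat /= star_slot_id; lia.
- by rewrite (leq_trans (star_n_contained_center w)) ?leqSpred.
- by move=> [i|] // _; rewrite star_n_contained_leaf.
Qed.

Lemma star_improper_setC1_center : improper_on star_edge [set~ None] q.-1.
Proof.
apply: (improper_on_subset (subsetT _) (star_rep ord0)) => [[i|]]; last by rewrite !inE.
by rewrite star_n_contained_leaf.
Qed.

Lemma star_center_lb (S : {set V}) l r : None \in S -> interval_rep star_edge S l r ->
  #|S| <= (n_contained S l r None).+3.
Proof.
move=> NS rep; rewrite (cardsD1 None S) NS add1n ltnS.
apply: (independent_neighbors_card rep NS (subD1set _ _)); first by rewrite !inE eqxx.
  by move=> [x|] [y|]; rewrite !inE.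
by move=> [y|]; rewrite !inE.
Qed.

Lemma star_improper : improper_on star_edge [set: V] q.
Proof.
apply: (improper_on_subset (subxx _) (star_rep ord0)) => [[i|] _].
  by rewrite star_n_contained_leaf.
exact: star_n_contained_center.
Qed.

Lemma star_critical : critical_improper star_edge q.
Proof.
split=> [|[w|]]; first exact: star_improper.
  exact: star_improper_setC1_leaf.
exact: star_improper_setC1_center.
Qed.

Lemma star_exactly_improper : exactly_improper_on star_edge [set: V] q.
Proof.
apply: exactly_improper_on_intro => [|l r rep]; first exact: star_improper.
exists None => //; have := star_center_lb (in_setT _) rep.
by rewrite cardsT card_option card_ord.
Qed.

Lemma star_exactly_improper_setC1_leaf w : exactly_improper_on star_edge [set~ Some w] q.-1.
Proof.
apply: exactly_improper_on_intro => [|l r rep]; first exact: star_improper_setC1_leaf.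
have NS : None \in [set~ Some w] by rewrite !inE.
exists None => //; have := star_center_lb NS rep.
by rewrite cardsC1 card_option card_ord /= !ltnS -subn1 leq_subLR add1n.
Qed.

End Star.

Lemma in_spec_imp_pred p : 0 < p -> in_spec_imp p p.-1.
Proof.
move=> p_gt0; exists _, (@star_edge p), (Some ord0); split; first exact: star_simple.
split; first exact: star_critical.
split; [exact: star_exactly_improper|exact: star_exactly_improper_setC1_leaf].
Qed.

Inductive spider_vertex (m k : nat) :=
  | Center | Hub | Arm | Hand | Leaf of 'I_m | Loner of 'I_k.
Arguments Center {m k}.
Arguments Hub {m k}.
Arguments Arm {m k}.
Arguments Hand {m k}.

Definition spider_code m k (x : spider_vertex m k) :
    option (option (option (option ('I_m + 'I_k)))) :=
  match x with
  | Center => None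
  | Hub => Some None
  | Arm => Some (Some None)
  | Hand => Some (Some (Some None))
  | Leaf i => Some (Some (Some (Some (inl i))))
  | Loner j => Some (Some (Some (Some (inr j))))
  end.

Definition spider_decode m k (c : option (option (option (option ('I_m + 'I_k))))) :
    spider_vertex m k :=
  match c with
  | None => Center
  | Some None => Hub
  | Some (Some None) => Arm
  | Some (Some (Some None)) => Hand
  | Some (Some (Some (Some (inl i)))) => Leaf k i
  | Some (Some (Some (Some (inr j)))) => Loner m j
  end.

Lemma spider_codeK m k : cancel (@spider_code m k) (@spider_decode m k).
Proof. by case. Qed.

Lemma spider_decodeK m k : cancel (@spider_decode m k) (@spider_code m k).
Proof. by case=> [[[[[]|]|]|]|]. Qed.

HB.instance Definition _ m k :=
  Finite.copy (spider_vertex m k) (can_type (@spider_codeK m k)).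

Section Spider.
Variables m k : nat.
Hypothesis m_gt0 : 0 < m.
Hypothesis k_gt0 : 0 < k.
Local Notation V := (spider_vertex m k).

Lemma card_spider_vertex : #|{: V}| = m + k + 4.
Proof.
rewrite (bij_eq_card (Bijective (@spider_codeK m k) (@spider_decodeK m k))).
by rewrite !card_option card_sum !card_ord; lia.
Qed.

Lemma eq_Leaf (i i' : 'I_m) : (Leaf k i == Leaf k i') = (val i == val i').
Proof. by apply/eqP/eqP => [[->]|/val_inj ->]. Qed.

Lemma eq_Loner (j j' : 'I_k) : (Loner m j == Loner m j') = (val j == val j').
Proof. by apply/eqP/eqP => [[->]|/val_inj ->]. Qed.

Definition spider_arc (x y : V) : bool :=
  match x, y with
  | Center, Center => false
  | Center, _ | Hub, Leaf _ | Hub, Arm | Arm, Hand => true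
  | _, _ => false
  end.

Definition spider_edge : rel V := fun x y => spider_arc x y || spider_arc y x.

Lemma spider_simple : simple_graph spider_edge.
Proof. by split=> [x y|[]]; rewrite // /spider_edge orbC. Qed.

Ltac case_vertex := case=> [||||[? ?]|[? ?]].

Ltac solve_layout :=
  apply: interval_rep_nat => [+ _|+ +];
  [case_vertex => /=; lia
  |case_vertex; case_vertex; rewrite !inE /spider_edge /= ?eq_Leaf ?eq_Loner //= => _ _; lia].

Ltac solve_rank_inj :=
  case_vertex; case_vertex => //= h;
  first [ congr Leaf; apply: val_inj => /=; lia
        | congr Loner; apply: val_inj => /=; lia
        | exfalso; lia ].

Ltac solve_range := case_vertex; rewrite //= ?eq_Leaf ?eq_Loner /=; lia.

(* The intervals of Arm, Hand and Loner 0 stick out of Center's. *)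
Definition layout1 (x : V) : nat * nat :=
  match x with
  | Center => (2, 3 * m + 3 * k + 5)
  | Hub => (4, 3 * m + 5)
  | Arm => (1, 4)
  | Hand => (0, 2)
  | Leaf i => (3 * i + 7, 3 * i + 9)
  | Loner j => (3 * m + 3 * (k.-1 - j) + 8, 3 * m + 3 * (k.-1 - j) + 9)
  end.

(* Each rank is injective and numbers the intervals nested in Center, and those nested
   in Hub, by consecutive integers. *)
Definition rank1 (x : V) : nat :=
  match x with
  | Center => m + k + 1
  | Hub => 0
  | Arm => m + k + 2
  | Hand => m + k + 3
  | Leaf i => i.+1
  | Loner j => m + (k.-1 - j) + 1
  end.

Local Notation l1 := (left_end layout1).
Local Notation r1 := (right_end layout1).

Lemma layout1_rep : interval_rep spider_edge [set: V] l1 r1.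
Proof. solve_layout. Qed.

Lemma rank1_inj : injective rank1.
Proof. solve_rank_inj. Qed.

Lemma layout1_center : n_contained [set: V] l1 r1 Center <= m + k.
Proof. by apply: (n_contained_nat_le (a := 0) _ rank1_inj); solve_range. Qed.

Lemma layout1_hub : n_contained [set: V] l1 r1 Hub <= m.-1.
Proof. by apply: (n_contained_nat_le (a := 1) _ rank1_inj); solve_range. Qed.

Lemma layout1_others S x : x != Center -> x != Hub -> n_contained S l1 r1 x = 0.
Proof.
move=> xC xH; apply: n_contained_nat_eq0.
by move: x xC xH; case_vertex => // _ _; solve_range.
Qed.

(* The intervals of Hub, Leaf 0 and Loner (k-1) stick out of Center's. *)
Definition layout2 (x : V) : nat * nat :=
  match x with
  | Center => (1, 3 * m + 3 * k + 2)
  | Hub => (0, 3 * m)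
  | Arm => (3 * m, 3 * m + 2)
  | Hand => (3 * m + 2, 3 * m + 3)
  | Leaf i => (3 * i, 3 * i + 1)
  | Loner j => (3 * m + 3 * j + 5, 3 * m + 3 * j + 6)
  end.

Definition rank2 (x : V) : nat :=
  match x with
  | Center => m + k + 2
  | Hub => m + k + 3
  | Arm => m
  | Hand => m + 1
  | Leaf i => i
  | Loner j => m + j + 2
  end.

Local Notation l2 := (left_end layout2).
Local Notation r2 := (right_end layout2).

Lemma layout2_rep : interval_rep spider_edge [set: V] l2 r2.
Proof. solve_layout. Qed.

Lemma rank2_inj : injective rank2.
Proof. solve_rank_inj. Qed.

Lemma layout2_center : n_contained [set: V] l2 r2 Center <= m + k.
Proof. by apply: (n_contained_nat_le (a := 1) _ rank2_inj); solve_range. Qed.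

Lemma layout2_hub : n_contained [set: V] l2 r2 Hub <= m.
Proof. by apply: (n_contained_nat_le (a := 0) _ rank2_inj); solve_range. Qed.

Lemma layout2_others S x : x != Center -> x != Hub -> n_contained S l2 r2 x = 0.
Proof.
move=> xC xH; apply: n_contained_nat_eq0.
by move: x xC xH; case_vertex => // _ _; solve_range.
Qed.

Definition is_loner (x : V) : bool := if x is Loner _ then true else false.

(* A representation of G without its loners, needed when k = 1; the loners' interval
   is chosen nested in no other one, so that it never counts. *)
Definition layout3 (x : V) : nat * nat :=
  match x with
  | Center => (2, 3 * m + 3)
  | Hub => (4, 3 * m + 4)
  | Arm => (1, 4)
  | Hand => (0, 2)
  | Leaf i => (3 * i + 5, 3 * i + 6)
  | Loner _ => (0, 3 * m + 4)
  end.

Definition rank3 (x : V) : nat :=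
  match x with
  | Center => m
  | Hub => m + 1
  | Arm => m + 2
  | Hand => m + 3
  | Leaf i => i
  | Loner j => m + j + 4
  end.

Local Notation l3 := (left_end layout3).
Local Notation r3 := (right_end layout3).

Lemma layout3_rep : interval_rep spider_edge [set x | ~~ is_loner x] l3 r3.
Proof. solve_layout. Qed.

Lemma rank3_inj : injective rank3.
Proof. solve_rank_inj. Qed.

Lemma layout3_center S : n_contained S l3 r3 Center <= m.
Proof. by apply: (n_contained_nat_le (a := 0) _ rank3_inj); solve_range. Qed.

Lemma layout3_hub S : n_contained S l3 r3 Hub <= m.
Proof. by apply: (n_contained_nat_le (a := 0) _ rank3_inj); solve_range. Qed.

Lemma layout3_others S x : x != Center -> x != Hub -> ~~ is_loner x ->
  n_contained S l3 r3 x = 0.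
Proof.
move=> xC xH xL; apply: n_contained_nat_eq0.
by move: x xC xH xL; case_vertex => // _ _ _; solve_range.
Qed.

Lemma spider_edge_center y : y != Center -> spider_edge Center y.
Proof. by case: y. Qed.

Definition peripheral (x : V) : bool :=
  match x with Hand | Leaf _ | Loner _ => true | _ => false end.

Lemma peripheral_independent : independent spider_edge [set x | peripheral x].
Proof. by move=> x y; rewrite !inE; case: x; case: y. Qed.

Lemma peripheral_not_common_neighbor y : peripheral y ->
  ~~ (spider_edge Hub y && spider_edge Arm y).
Proof. by case: y. Qed.

Section CenterLowerBound.
Variables l r : V -> R.
Hypothesis rep : interval_rep spider_edge [set: V] l r.
Local Notation U := (uncontained [set: V] l r Center).
Local Notation lc := (l Center).
Local Notation rc := (r Center).

Definition peripheral_covering t : {set V} := [set y | peripheral y && covers l r y t].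

Lemma peripheral_covering_le1 t : #|peripheral_covering t| <= 1.
Proof.
apply: leq_trans (independent_covers_le1 rep t (subsetT _) peripheral_independent).
by apply/subset_leq_card/subsetP => y; rewrite !inE.
Qed.

Lemma uncontained_covers y : y \in U -> covers l r y lc || covers l r y rc.
Proof.
rewrite !inE => /andP[/andP[yC _] ncy].
exact: (neighbor_covers_endpoint rep (in_setT _) (in_setT _) yC (spider_edge_center yC) ncy).
Qed.

Lemma uncontained_peripheral y : y \in U -> y != Hub -> y != Arm -> peripheral y.
Proof. by rewrite !inE => /andP[/andP[+ _] _]; case: y. Qed.

Lemma uncontained_le3_shared t t' : covers l r Hub t -> covers l r Arm t ->
  (forall y, y \in U -> covers l r y t || covers l r y t') -> #|U| <= 3.
Proof.
move=> Ht At Ucov; have : U \subset [set Hub; Arm] :|: peripheral_covering t'.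
  apply/subsetP => y yU; rewrite !inE.
  have [//|yH] := eqVneq y Hub; have [//|yA] := eqVneq y Arm.
  have py := uncontained_peripheral yU yH yA; rewrite py /=.
  have /orP[yt|//] := Ucov y yU.
  have /negP[] := peripheral_not_common_neighbor py.
  by rewrite !(edge_of_covers rep _ _ _ _ yt) ?in_setT // eq_sym.
move/subset_leq_card/leq_trans; apply; apply: leq_trans (leq_card_setU _ _) _.
by rewrite cards2 /= -[3]/(2 + 1) leq_add2l peripheral_covering_le1.
Qed.

Lemma spider_uncontained_le3 : #|U| <= 3.
Proof.
have [/andP[HU AU]|HAU] := boolP ((Hub \in U) && (Arm \in U)).
  (* Loner 0 meets Center's interval but neither Hub's nor Arm's. *)
  have := covers_common_endpoint rep (in_setT Center) (in_setT Hub) (in_setT Arm)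
    (in_setT (Loner m (Ordinal k_gt0))) isT isT isT isT isT isT isT isT
    (uncontained_covers HU) (uncontained_covers AU).
  case/orP => /andP[Ht At]; first exact: (uncontained_le3_shared Ht At uncontained_covers).
  by apply: (uncontained_le3_shared (t' := lc) Ht At) => y /uncontained_covers; rewrite orbC.
have : U \subset (U :&: [set Hub; Arm]) :|: peripheral_covering lc :|: peripheral_covering rc.
  apply/subsetP => y yU; rewrite !in_setU in_setI yU /= !inE.
  have [//|yH] := eqVneq y Hub; have [//|yA] := eqVneq y Arm.
  by rewrite uncontained_peripheral //=; apply: uncontained_covers.
move/subset_leq_card/leq_trans; apply; apply: leq_trans (card_setU3_le _ _ _) _.
have : #|U :&: [set Hub; Arm]| <= 1.
  apply/card_le1_eqP => x y; rewrite !in_setI !in_set2.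
  move=> /andP[xU /orP[]/eqP xE] /andP[yU /orP[]/eqP yE]; subst x y => //.
  - by move: HAU; rewrite xU yU.
  - by move: HAU; rewrite xU yU.
move=> HA_le1; rewrite -[3]/(1 + 1 + 1).
by apply: leq_add; [apply: leq_add|]; rewrite ?peripheral_covering_le1.
Qed.

Lemma spider_center_lb : m + k <= n_contained [set: V] l r Center.
Proof.
have := spider_uncontained_le3.
rewrite -(leq_add2l (n_contained [set: V] l r Center)) n_contained_add_uncontained.
by rewrite setTD cardsC1 card_spider_vertex; lia.
Qed.

End CenterLowerBound.

Lemma spider_hub_lb l r : interval_rep spider_edge [set~ Center] l r ->
  m.-1 <= n_contained [set~ Center] l r Hub.
Proof.
move=> rep; set D := Arm |: [set Leaf k i | i : 'I_m].
have D_cases y : y \in D -> (y = Arm) \/ exists i, y = Leaf k i.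
  by rewrite !inE => /orP[/eqP ->|/imsetP[i _ ->]]; [left|right; exists i].
have cardD : #|D| = m.+1.
  rewrite cardsU1 card_imset; last by move=> i j [].
  by rewrite card_ord; case: imsetP => [[]|].
have sDS : D \subset [set~ Center] by apply/subsetP => y /D_cases[|[i]] ->; rewrite !inE.
have HD : Hub \notin D by apply/negP => /D_cases[|[]].
have indD : independent spider_edge D by move=> x y /D_cases[|[i]] -> /D_cases[|[j]] ->.
have HS : Hub \in [set~ Center :> V] by rewrite !inE.
have adjD y : y \in D -> spider_edge Hub y by move/D_cases => [|[i]] ->.
by have := independent_neighbors_card rep HS sDS HD indD adjD; rewrite cardD; lia.
Qed.

Lemma spider_improper_setC1_center : improper_on spider_edge [set~ Center] m.-1.
Proof.
apply: (improper_on_subset (subsetT _) layout1_rep) => x; rewrite !inE => xC.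
have [->|xH] := eqVneq x Hub; last by rewrite layout1_others.
exact: leq_trans (n_contained_subset _ _ _ (subsetT _)) layout1_hub.
Qed.

Lemma spider_improper : improper_on spider_edge [set: V] (m + k).
Proof.
apply: (improper_on_subset (subxx _) layout1_rep) => x _.
have [->|xC] := eqVneq x Center; first exact: layout1_center.
have [->|xH] := eqVneq x Hub; last by rewrite layout1_others.
by apply: leq_trans layout1_hub _; lia.
Qed.

Lemma layout_improper_setC1 I v :
  interval_rep spider_edge [set: V] (left_end I) (right_end I) ->
  n_contained [set: V] (left_end I) (right_end I) Center <= m + k ->
  n_contained [set: V] (left_end I) (right_end I) Hub <= (m + k).-1 ->
  (forall x, x != Center -> x != Hub -> n_contained [set: V] (left_end I) (right_end I) x = 0) ->
  v != Center -> (I Center).1 <= (I v).1 -> (I v).2 <= (I Center).2 ->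
  improper_on spider_edge [set~ v] (m + k).-1.
Proof.
move=> rep hC hH h0 vC v1 v2.
apply: (improper_on_setC1_nested rep vC); first by rewrite nested_nat v1 v2.
  by rewrite prednK ?addn_gt0 ?m_gt0.
move=> x xC; have [->|xH] := eqVneq x Hub; first exact: hH.
by rewrite h0.
Qed.

Lemma spider_improper_setC1_single_loner j : k = 1 ->
  improper_on spider_edge [set~ Loner m j] (m + k).-1.
Proof.
move=> k1; have sub : [set~ Loner m j] \subset [set x | ~~ is_loner x].
  apply/subsetP => -[||||i|j']; rewrite !inE //= eq_Loner.
  by case: j j' => [j hj] [j' hj'] /=; lia.
apply: (improper_on_subset sub layout3_rep) => x xS.
have -> : (m + k).-1 = m by lia.
have [->|xC] := eqVneq x Center; first exact: layout3_center.
have [->|xH] := eqVneq x Hub; first exact: layout3_hub.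
by rewrite layout3_others // -(in_set (fun x => ~~ is_loner x)) (subsetP sub).
Qed.

Lemma spider_critical : critical_improper spider_edge (m + k).
Proof.
split=> [|v]; first exact: spider_improper.
have hub1 : m.-1 <= (m + k).-1 by lia.
have hub2 : m <= (m + k).-1 by lia.
have lay1 := layout_improper_setC1 layout1_rep layout1_center (leq_trans layout1_hub hub1)
  (layout1_others _).
have lay2 := layout_improper_setC1 layout2_rep layout2_center (leq_trans layout2_hub hub2)
  (layout2_others _).
case: v => [||||[i hi]|[j hj]]; try by [apply: lay1 => /=; lia | apply: lay2 => /=; lia].
  exact: improper_on_mono hub1 spider_improper_setC1_center.
have [k1|k_gt1] := leqP k 1; first by apply: spider_improper_setC1_single_loner; lia.
by case: (posnP j) => [j0|j_gt0]; [apply: lay2|apply: lay1] => /=; lia.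
Qed.

Lemma spider_exactly_improper : exactly_improper_on spider_edge [set: V] (m + k).
Proof.
apply: exactly_improper_on_intro => [|l r rep]; first exact: spider_improper.
by exists Center; rewrite ?in_setT ?spider_center_lb.
Qed.

Lemma spider_exactly_improper_setC1_center :
  exactly_improper_on spider_edge [set~ Center] m.-1.
Proof.
apply: exactly_improper_on_intro => [|l r rep]; first exact: spider_improper_setC1_center.
by exists Hub; rewrite ?inE ?spider_hub_lb.
Qed.

End Spider.

Lemma in_spec_imp_spider m k : 0 < m -> 0 < k -> in_spec_imp (m + k) m.-1.
Proof.
move=> m_gt0 k_gt0; exists _, (@spider_edge m k), Center; split; first exact: spider_simple.
split; first exact: spider_critical.
split; [exact: spider_exactly_improper|exact: spider_exactly_improper_setC1_center].
Qed.

Theorem theorem1 (p : nat) : 0 < p ->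
  forall n : nat, in_spec_imp p n <-> n < p.
Proof.
move=> p_gt0 n; split; first exact: in_spec_imp_lt.
move=> n_lt_p; have [->|n_ne] := eqVneq n p.-1; first exact: in_spec_imp_pred.
have -> : p = n.+1 + (p - n.+1) by lia.
by apply: in_spec_imp_spider; lia.
Qed.
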